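(* Let $G_1=(V_1,E_1)$ and $G_2=(V_2,E_2)$ be finite simple graphs with degree sequences $d_1$ and $d_2$. If $d_1$ is a rearrangement of $d_2$ (i.e., there is a bijection $\pi:V_1\to V_2$ with $d_2(\pi(v))=d_1(v)$ for all $v$), then $\dim\mathcal{A}(\widehat G_1)=\dim\mathcal{A}(\widehat G_2)$.
   Context: For a simple graph $G=(V,E)$, $\widehat G$ is the complete graph $(V,\binom{V}{2})$ with pairs in $E$ colored red and other pairs colored blue. For a 2-colored graph $H=(V,F)$, the alternating cone $\mathcal{A}(H)\subseteq\mathbb{R}^F$ is the set of $x\ge0$ such that at each vertex the sum of $x(e)$ over incident red edges equals the sum over incident blue edges. *)

From mathcomp Require Import all_boot all_order all_algebra.
Set Implicit Arguments. Unset Strict Implicit. Unset Printing Implicit Defensive.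
Import Order.TTheory GRing.Theory Num.Theory.
Local Open Scope ring_scope.

Definition simple_graph (V : finType) (e : rel V) : Prop :=
  symmetric e /\ irreflexive e.

Definition deg (V : finType) (e : rel V) (v : V) : nat := #|[set w | e v w]|.

(* edges of the complete graph on V: the 2-element subsets of V *)
Definition cedge (V : finType) : finType := {A : {set V} | #|A| == 2%N}.

(* in \hat G, the pair A is red iff it is an edge of G *)
Definition red (V : finType) (e : rel V) (A : cedge V) : bool :=
  [exists u, exists w, (val A == [set u; w]) && e u w].

Definition alt_cone (R : realFieldType) (V : finType) (e : rel V)
    (x : {ffun cedge V -> R^o}) : Prop :=
  (forall A, 0 <= x A) /\
  (forall v : V, \sum_(A : cedge V | (v \in val A) && red e A) x A
               = \sum_(A : cedge V | (v \in val A) && ~~ red e A) x A).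

(* U is the linear span of the set C (C contained in U and U spanned by finitely
   many elements of C); such a U is unique, and its dimension is dim C. *)
Definition span_of (R : realFieldType) (T : finType)
    (C : {ffun T -> R^o} -> Prop) (U : {vspace {ffun T -> R^o}}) : Prop :=
  (forall x, C x -> x \in U) /\
  exists s : seq {ffun T -> R^o}, (forall x, x \in s -> C x) /\ (<<s>>%VS = U).

(* Two simple graphs on the same vertex set with the same degrees are joined by a
   sequence of 2-switches, each trading two edges pq, rs and two non-edges pr, qs
   for the edges pr, qs: a switch of one of the graphs along a suitable alternating
   path a-b-c-d lowers the number of pairs on which they differ.  A 2-switch keeps
   the dimension of the alternating cone: the four pairs form a set Q meeting every
   vertex in as many red as blue pairs, so replacing x by (sum of x over Q) - x on Q
   is an injective linear map from the cone of the graph into the cone of the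
   switched graph, and the same map goes back.  A bijection of the vertex sets just
   permutes the coordinates of the cone. *)

From mathcomp Require Import all_boot all_order all_algebra.
From HB Require Import structures.
From Stdlib Require Import Classical.
From mathcomp Require Import zify ring.
Set Implicit Arguments. Unset Strict Implicit. Unset Printing Implicit Defensive.
Import Order.TTheory GRing.Theory Num.Theory.
Local Open Scope ring_scope.

Lemma card_setXor_lt (T : finType) (D Q : {set T}) :
  (#|Q| < (#|D :&: Q|).*2)%N -> (#|[set x | (x \in D) (+) (x \in Q)]| < #|D|)%N.
Proof.
have -> : [set x | (x \in D) (+) (x \in Q)] = (D :\: Q) :|: (Q :\: D).
  by apply/setP => x; rewrite !inE; case: (x \in D); case: (x \in Q).
have disjDQ : (D :\: Q) :&: (Q :\: D) = set0.
  by apply/setP => x; rewrite !inE; case: (x \in D); case: (x \in Q).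
have := cardsU (D :\: Q) (Q :\: D); rewrite disjDQ cards0 subn0.
have := cardsID Q D; have := cardsID D Q; rewrite setIC; lia.
Qed.

Lemma card_lt_of_subD1 (T : finType) (X Y : {set T}) a b c :
  b \in Y :\: X -> c \notin X -> b != c -> (a \in X -> c \in Y) -> X :\ a \subset Y ->
  (#|X| < #|Y|)%N.
Proof.
move=> /setDP[bY bX] cX bc acY XaY.
have XaYbc : X :\ a \subset Y :\ b :\ c.
  apply/subsetP => x; rewrite !inE => /andP[xa xX].
  rewrite (subsetP XaY) ?inE ?xa //; apply/and3P; split => //.
    by apply: contraNneq cX => <-.
  by apply: contraNneq bX => <-.
have := subset_leq_card XaYbc.
rewrite (cardsD1 a X) (cardsD1 b Y) (cardsD1 c (Y :\ b)) bY in_setD1 (eq_sym c b) bc.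
by case: (boolP (a \in X)) => [/acY -> | _] /=; lia.
Qed.

Section SpanDim.
Variable R : realFieldType.

Definition same_span_dim (T1 T2 : finType)
    (C1 : {ffun T1 -> R^o} -> Prop) (C2 : {ffun T2 -> R^o} -> Prop) : Prop :=
  forall U1 U2, span_of C1 U1 -> span_of C2 U2 -> \dim U1 = \dim U2.

Lemma span_of_exists (T : finType) (C : {ffun T -> R^o} -> Prop) :
  exists U, span_of C U.
Proof.
suff span_from (s : seq {ffun T -> R^o}) :
    (forall x, x \in s -> C x) -> exists U, span_of C U.
  by apply: (span_from [::]).
have [n] := ubnP (\dim {:{ffun T -> R^o}} - \dim <<s>>)%N.
elim: n s => // n IHn s lt_n sC.
have [[x [Cx xNs]] | NCs] := classic (exists x, C x /\ x \notin <<s>>%VS); last first.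
  exists <<s>>%VS; split; last by exists s.
  by move=> x Cx; apply/negPn/negP => xNs; apply: NCs; exists x.
apply: (IHn (x :: s)) => [|y]; last by rewrite inE => /predU1P[-> | /sC].
have s_sub : (<<s>> <= <<x :: s>>)%VS by rewrite span_cons addvSr.
have lt_dim : (\dim <<s>> < \dim <<x :: s>>)%N.
  rewrite (ltn_leqif (dimv_leqif_sup s_sub)) span_cons subv_add subvv andbT.
  by rewrite -memvE.
have le_full : (\dim <<x :: s>> <= \dim {:{ffun T -> R^o}})%N := dimvS (subvf _).
lia.
Qed.

Lemma span_of_dim_le (T1 T2 : finType) (C1 : {ffun T1 -> R^o} -> Prop)
    (C2 : {ffun T2 -> R^o} -> Prop) (f : {linear {ffun T1 -> R^o} -> {ffun T2 -> R^o}})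
    U1 U2 :
  injective f -> (forall x, C1 x -> C2 (f x)) -> span_of C1 U1 -> span_of C2 U2 ->
  (\dim U1 <= \dim U2)%N.
Proof.
move=> f_inj fC [_ [s [sC <-]]] [C2U2 _].
have /eqP ker0 : lker (linfun f) == 0%VS.
  by apply/lker0P => x y; rewrite !lfunE; apply: f_inj.
rewrite -(limg_dim_eq (f := linfun f)) ?ker0 ?capv0 //; apply: dimvS.
rewrite limg_span; apply/span_subvP => _ /mapP[x xs ->].
by rewrite lfunE; apply/C2U2/fC/sC.
Qed.

Lemma same_span_dim_inj (T1 T2 : finType) (C1 : {ffun T1 -> R^o} -> Prop)
    (C2 : {ffun T2 -> R^o} -> Prop)
    (f : {linear {ffun T1 -> R^o} -> {ffun T2 -> R^o}})
    (g : {linear {ffun T2 -> R^o} -> {ffun T1 -> R^o}}) :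
  injective f -> (forall x, C1 x -> C2 (f x)) ->
  injective g -> (forall y, C2 y -> C1 (g y)) -> same_span_dim C1 C2.
Proof.
move=> f_inj fC g_inj gC U1 U2 s1 s2; apply/eqP.
by rewrite eqn_leq (span_of_dim_le f_inj fC s1 s2) (span_of_dim_le g_inj gC s2 s1).
Qed.

Lemma same_span_dim_eq (T : finType) (C1 C2 : {ffun T -> R^o} -> Prop) :
  (forall x, C1 x <-> C2 x) -> same_span_dim C1 C2.
Proof.
by move=> C12; apply: (@same_span_dim_inj _ _ _ _ idfun idfun) => // x /C12.
Qed.

Lemma same_span_dim_sym (T1 T2 : finType) (C1 : {ffun T1 -> R^o} -> Prop)
    (C2 : {ffun T2 -> R^o} -> Prop) :
  same_span_dim C1 C2 -> same_span_dim C2 C1.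
Proof. by move=> C12 U2 U1 s2 s1; rewrite (C12 _ _ s1 s2). Qed.

Lemma same_span_dim_trans (T1 T2 T3 : finType) (C1 : {ffun T1 -> R^o} -> Prop)
    (C2 : {ffun T2 -> R^o} -> Prop) (C3 : {ffun T3 -> R^o} -> Prop) :
  same_span_dim C1 C2 -> same_span_dim C2 C3 -> same_span_dim C1 C3.
Proof.
move=> C12 C23 U1 U3 s1 s3; have [U2 s2] := span_of_exists C2.
by rewrite (C12 _ _ s1 s2) (C23 _ _ s2 s3).
Qed.

End SpanDim.
Arguments same_span_dim R {T1 T2}.

Section Pairs.
Variable V : finType.
Implicit Types (e : rel V) (A : cedge V).

Lemma set2_eq (u w x y : V) :
  ([set u; w] == [set x; y]) = (u == x) && (w == y) || (u == y) && (w == x).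
Proof.
apply/eqP/idP => [uw_xy | /orP[] /andP[/eqP-> /eqP->] //]; last exact: setUC.
have := set21 u w; have := set22 u w; have := set21 x y; have := set22 x y.
rewrite -{1 2}uw_xy {3 4}uw_xy !inE.
by do 4!(case/orP=> /eqP ?; subst); rewrite ?eqxx ?orbT.
Qed.

Lemma cedgeP A : exists u w, u != w /\ val A = [set u; w].
Proof. by apply/cards2P; case: A. Qed.

Lemma red_set2 e u w : symmetric e ->
  [exists x, exists y, ([set u; w] == [set x; y]) && e x y] = e u w.
Proof.
move=> e_sym; apply/existsP/idP => [[x /existsP[y]] | euw]; last first.
  by exists u; apply/existsP; exists w; rewrite eqxx.
by rewrite set2_eq => /andP[/orP[] /andP[/eqP-> /eqP->]] //; rewrite e_sym.
Qed.

Lemma redE e A u w : symmetric e -> val A = [set u; w] -> red e A = e u w.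
Proof. by move=> e_sym A_uw; rewrite /red A_uw red_set2. Qed.

Lemma big_cedge_seq (I : Type) (idx : I) (op : Monoid.com_law idx)
    (s : seq {set V}) (F : {set V} -> I) :
  uniq s -> all (fun B : {set V} => #|B| == 2%N) s ->
  \big[op/idx]_(A : cedge V | val A \in s) F (val A) = \big[op/idx]_(B <- s) F B.
Proof.
move=> s_uniq s2; rewrite big_uniq //.
rewrite [RHS](reindex_omap (val : cedge V -> {set V}) insub) => [|B Bs].
  by apply: eq_bigl => A; rewrite valK eqxx andbT.
by rewrite insubT ?(allP s2).
Qed.

End Pairs.

Section AlternatingCone.
Variables (R : realFieldType) (V : finType).
Implicit Types (e : rel V) (x : {ffun cedge V -> R^o}).

Definition imbalance e x (v : V) : R :=
  \sum_(A : cedge V | v \in val A) (if red e A then x A else - x A).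

Lemma alt_coneE e x :
  alt_cone e x <-> (forall A, 0 <= x A) /\ (forall v, imbalance e x v = 0).
Proof.
have imbalanceE v : imbalance e x v =
    \sum_(A : cedge V | (v \in val A) && red e A) x A
  - \sum_(A : cedge V | (v \in val A) && ~~ red e A) x A.
  rewrite /imbalance (bigID (red e)) /= -sumrN.
  by congr (_ + _); apply: eq_bigr => A /andP[_ rA]; rewrite ?rA ?(negbTE rA).
split=> -[x_ge0 x_bal]; split=> // v; first by rewrite imbalanceE x_bal subrr.
by apply/eqP; rewrite -subr_eq0 -imbalanceE x_bal.
Qed.

Lemma alt_cone_eq_red e e' x : red e =1 red e' -> alt_cone e x <-> alt_cone e' x.
Proof.
move=> ee'; have imbalance_eq v : imbalance e x v = imbalance e' x v.
  by apply: eq_bigr => A _; rewrite ee'.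
by rewrite !alt_coneE; split=> -[x_ge0 x_bal]; split=> // v; rewrite ?imbalance_eq // -imbalance_eq.
Qed.

Section Flip.
Variable Q : {set cedge V}.

Definition flip_on x : {ffun cedge V -> R^o} :=
  [ffun A => if A \in Q then \sum_(B in Q) x B - x A else x A].

Lemma flip_on_is_linear : linear flip_on.
Proof.
move=> k x y; apply/ffunP => A; rewrite !ffunE; case: ifP => // _.
rewrite (eq_bigr (fun B => k *: x B + y B)) => [|B _]; last by rewrite !ffunE.
by rewrite big_split -scaler_sumr scalerBr opprD addrACA.
Qed.

HB.instance Definition _ :=
  GRing.isLinear.Build R {ffun cedge V -> R^o} {ffun cedge V -> R^o} *:%R
    flip_on flip_on_is_linear.

Lemma flip_on_inj : #|Q| != 1%N -> injective flip_on.
Proof.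
move=> Q_neq1 x y xy.
have sum_flip z : \sum_(A in Q) flip_on z A = (#|Q|%:R - 1) * \sum_(A in Q) z A.
  rewrite (eq_bigr (fun A => \sum_(B in Q) z B - z A)) => [|A AQ]; last by rewrite ffunE AQ.
  by rewrite sumrB sumr_const mulrBl mul1r mulr_natl.
have sum_xy : \sum_(A in Q) x A = \sum_(A in Q) y A.
  apply: (mulfI (x := #|Q|%:R - 1)); first by rewrite subr_eq0 pnatr_eq1.
  by rewrite -!sum_flip xy.
apply/ffunP => A; move/ffunP/(_ A): xy; rewrite !ffunE sum_xy.
by case: ifP => // _ /addrI/oppr_inj.
Qed.

Lemma flip_on_ge0 x : (forall A, 0 <= x A) -> forall A, 0 <= flip_on x A.
Proof.
move=> x_ge0 A; rewrite ffunE; case: ifP => AQ //.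
by rewrite (bigD1 A AQ) /= addrAC subrr add0r sumr_ge0.
Qed.

Definition alternating e : Prop :=
  forall v, \sum_(A in Q | v \in val A) (if red e A then 1 else -1) = 0 :> R.

Variables e e' : rel V.
Hypothesis red_flip : forall A, red e' A = red e A (+) (A \in Q).

Lemma imbalance_flip_on x v : alternating e -> imbalance e' (flip_on x) v = imbalance e x v.
Proof.
move=> Q_alt; set S := \sum_(B in Q) x B.
have termE A : (if red e' A then flip_on x A else - flip_on x A) =
    (if red e A then x A else - x A) - (if A \in Q then S * (if red e A then 1 else -1) else 0).
  by rewrite red_flip ffunE -/S; case: (A \in Q); case: (red e A); rewrite /=; ring.
rewrite /imbalance (eq_bigr _ (fun A _ => termE A)) sumrB -[RHS]subr0; congr (_ - _).
rewrite -big_mkcondr -mulr_sumr -[RHS](mulr0 S) -[in RHS](Q_alt v); congr (_ * _).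
by apply: eq_bigl => A; rewrite andbC.
Qed.

Lemma alt_cone_flip_on x : alternating e -> alt_cone e x -> alt_cone e' (flip_on x).
Proof.
move=> Q_alt /alt_coneE[x_ge0 x_bal]; apply/alt_coneE; split; first exact: flip_on_ge0.
by move=> v; rewrite imbalance_flip_on.
Qed.

Lemma alternating_flip : alternating e -> alternating e'.
Proof.
move=> Q_alt v; rewrite -[RHS]oppr0 -[in RHS](Q_alt v) -sumrN.
by apply: eq_bigr => A /andP[AQ _]; rewrite red_flip AQ; case: (red e A); rewrite /= ?opprK.
Qed.

End Flip.

Lemma same_span_dim_flip_on (Q : {set cedge V}) e e' :
  #|Q| != 1%N -> (forall A, red e' A = red e A (+) (A \in Q)) -> alternating Q e ->
  same_span_dim R (alt_cone e) (alt_cone e').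
Proof.
move=> Q_neq1 red_flip Q_alt.
have red_flip' A : red e A = red e' A (+) (A \in Q) by rewrite red_flip addbK.
apply: (same_span_dim_inj (f := flip_on Q) (g := flip_on Q)); try exact: flip_on_inj.
  by move=> x; apply: alt_cone_flip_on.
by move=> x; apply: alt_cone_flip_on (alternating_flip red_flip Q_alt).
Qed.

End AlternatingCone.

Section Switch.
Variable V : finType.
Implicit Types (g h : rel V) (p q r s : V).

Definition square p q r s : seq {set V} := [:: [set p; q]; [set r; s]; [set p; r]; [set q; s]].

Definition square_edges p q r s : {set cedge V} := [set A | val A \in square p q r s].

(* When [switchable g p q r s] holds, [switch g p q r s] trades the edges pq, rs
   of g for pr, qs. *)
Definition switch g p q r s : rel V := fun u w => g u w (+) ([set u; w] \in square p q r s).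

Definition switchable g p q r s : bool :=
  [&& uniq [:: p; q; r; s], g p q, g r s, ~~ g p r & ~~ g q s].

Lemma eq_distinct4 p q r s : uniq [:: p; q; r; s] ->
  ((p == q) = false) * ((p == r) = false) * ((p == s) = false) *
  ((q == r) = false) * ((q == s) = false) * ((r == s) = false) *
  ((q == p) = false) * ((r == p) = false) * ((s == p) = false) *
  ((r == q) = false) * ((s == q) = false) * ((s == r) = false).
Proof.
rewrite /= !inE !negb_or andbT => /and3P[/and3P[pq pr ps] /andP[qr qs] rs].
rewrite (eq_sym q p) (eq_sym r p) (eq_sym s p) (eq_sym r q) (eq_sym s q) (eq_sym s r).
by rewrite (negbTE pq) (negbTE pr) (negbTE ps) (negbTE qr) (negbTE qs) (negbTE rs).
Qed.

Lemma square_card2 p q r s : uniq [:: p; q; r; s] ->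
  all (fun B : {set V} => #|B| == 2%N) (square p q r s).
Proof. by move=> /eq_distinct4 E; rewrite /= !cards2 !E. Qed.

Lemma square_uniq p q r s : uniq [:: p; q; r; s] -> uniq (square p q r s).
Proof. by move=> /eq_distinct4 E; rewrite /= !inE !set2_eq !E ?andbF. Qed.

Lemma card_square_edges p q r s : uniq [:: p; q; r; s] -> #|square_edges p q r s| = 4%N.
Proof.
move=> pqrs; rewrite -sum1_card (eq_bigl (fun A : cedge V => val A \in square p q r s)).
  by rewrite (big_cedge_seq _ (fun=> 1%N)) ?square_uniq ?square_card2 // !big_cons big_nil.
by move=> A; rewrite inE.
Qed.

Lemma switch_sym g p q r s : symmetric g -> symmetric (switch g p q r s).
Proof. by move=> g_sym u w; rewrite /switch g_sym setUC. Qed.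

Lemma switch_irr g p q r s : irreflexive g -> uniq [:: p; q; r; s] ->
  irreflexive (switch g p q r s).
Proof.
move=> g_irr /square_card2 sq2 u; rewrite /switch g_irr /=.
by apply/negP => /(allP sq2); rewrite setUid cards1.
Qed.

Lemma switch_simple g p q r s :
  simple_graph g -> switchable g p q r s -> simple_graph (switch g p q r s).
Proof.
move=> [g_sym g_irr] /and5P[pqrs _ _ _ _].
by split; [apply: switch_sym | apply: switch_irr].
Qed.

Lemma red_switch g p q r s (A : cedge V) : symmetric g ->
  red (switch g p q r s) A = red g A (+) (A \in square_edges p q r s).
Proof.
move=> g_sym; have [u [w [_ A_uw]]] := cedgeP A.
by rewrite (redE (switch_sym p q r s g_sym) A_uw) (redE g_sym A_uw) inE A_uw.
Qed.

Lemma alternating_square (R : realFieldType) g p q r s :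
  symmetric g -> switchable g p q r s -> alternating R (square_edges p q r s) g.
Proof.
move=> g_sym /and5P[pqrs gpq grs gpr gqs] v; have E := eq_distinct4 pqrs.
(* Both {pq, rs} and {pr, qs} partition {p, q, r, s}. *)
rewrite big_mkcondr (eq_bigl (fun A : cedge V => val A \in square p q r s)) => [|A]; last first.
  by rewrite inE.
rewrite /red (big_cedge_seq _ (fun B => if v \in B then
    if [exists x, exists y, (B == [set x; y]) && g x y] then 1 else -1 else 0 : R)).
- rewrite !big_cons big_nil !red_set2 // gpq grs (negbTE gpr) (negbTE gqs) !inE.
  have [->|vp] := eqVneq v p; first by rewrite !E /=; ring.
  have [->|vq] := eqVneq v q; first by rewrite !E /=; ring.
  have [->|vr] := eqVneq v r; first by rewrite !E /=; ring.
  by have [_|_] := eqVneq v s; rewrite /=; ring.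
- exact: square_uniq.
- exact: square_card2.
Qed.

Lemma same_span_dim_switch (R : realFieldType) g p q r s :
  symmetric g -> switchable g p q r s ->
  same_span_dim R (alt_cone g) (alt_cone (switch g p q r s)).
Proof.
move=> g_sym g_sw; apply: same_span_dim_flip_on (alternating_square R g_sym g_sw).
  by case/and5P: g_sw => /card_square_edges ->.
by move=> A; apply: red_switch.
Qed.

Lemma deg_swap_neighbour g g' v x y : x != y -> g v x -> ~~ g v y ->
  (forall w, g' v w = g v w (+) (w \in [set x; y])) -> deg g' v = deg g v.
Proof.
move=> xy gvx gvy g'E; rewrite /deg.
have -> : [set w | g' v w] = y |: ([set w | g v w] :\ x).
  apply/setP => w; rewrite !inE g'E !inE.
  have [->|wy] := eqVneq w y; first by rewrite (negbTE gvy) orbT.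
  by have [->|wx] := eqVneq w x; rewrite ?gvx // addbF.
rewrite cardsU1 (cardsD1 x [set w | g v w]) !inE gvx (negbTE gvy) andbF.
by rewrite add1n.
Qed.

Lemma deg_switch g p q r s : symmetric g -> switchable g p q r s ->
  deg (switch g p q r s) =1 deg g.
Proof.
move=> g_sym /and5P[pqrs gpq grs gpr gqs] v; have E := eq_distinct4 pqrs.
have deg_at u x y : x != y -> g u x -> ~~ g u y ->
    (forall w, ([set u; w] \in square p q r s) = (w \in [set x; y])) ->
    deg (switch g p q r s) u = deg g u.
  by move=> xy gvx gvy sqE; apply: deg_swap_neighbour xy gvx gvy _ => w; rewrite /switch sqE.
have sqE u w : [set u; w] \in square p q r s =
    [|| (u == p) && (w == q) || (u == q) && (w == p),
        (u == r) && (w == s) || (u == s) && (w == r),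
        (u == p) && (w == r) || (u == r) && (w == p)
      | (u == q) && (w == s) || (u == s) && (w == q)].
  by rewrite !inE !set2_eq.
have [->|vp] := eqVneq v p.
  apply: (deg_at p q r _ gpq gpr); rewrite ?E // => w.
  by rewrite sqE !E eqxx !inE /= ?orbF.
have [->|vq] := eqVneq v q.
  apply: (deg_at q p s _ _ gqs); rewrite ?E ?(g_sym q p) // => w.
  by rewrite sqE !E eqxx !inE /= ?orbF.
have [->|vr] := eqVneq v r.
  apply: (deg_at r s p _ grs); rewrite ?E ?(g_sym r p) // => w.
  by rewrite sqE !E eqxx !inE /= ?orbF.
have [->|vs] := eqVneq v s.
  apply: (deg_at s r q); rewrite ?E ?(g_sym s r) ?(g_sym s q) // => w.
  by rewrite sqE !E eqxx !inE /= ?orbF.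
rewrite /deg; apply: eq_card => w.
by rewrite !inE /switch sqE (negbTE vp) (negbTE vq) (negbTE vr) (negbTE vs) addbF.
Qed.

End Switch.

Section Distance.
Variable V : finType.
Implicit Types (g h : rel V) (p q r s : V).

Definition red_diff g h : {set cedge V} := [set A | red g A != red h A].

Lemma red_diffC g h : red_diff g h = red_diff h g.
Proof. by apply/setP => A; rewrite !inE eq_sym. Qed.

Lemma card_red_diff_square g h p q r s :
  symmetric g -> symmetric h -> uniq [:: p; q; r; s] ->
  #|red_diff g h :&: square_edges p q r s| =
  ((g p q != h p q) + (g r s != h r s) + (g p r != h p r) + (g q s != h q s))%N.
Proof.
move=> g_sym h_sym pqrs; rewrite -sum1_card.
rewrite (eq_bigl (fun A : cedge V => (val A \in square p q r s) && (A \in red_diff g h)));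
  last by move=> A; rewrite !inE andbC.
rewrite big_mkcondr /red_diff; under eq_bigr do rewrite inE /red.
rewrite (big_cedge_seq _ (fun B => if [exists x, exists y, (B == [set x; y]) && g x y] !=
    [exists x, exists y, (B == [set x; y]) && h x y] then 1 else 0)%N).
- by rewrite !big_cons big_nil !red_set2 // /= !addnA addn0.
- exact: square_uniq.
- exact: square_card2.
Qed.

Lemma card_red_diff_switch g h p q r s :
  symmetric g -> symmetric h -> switchable g p q r s ->
  (2 < (g p q != h p q) + (g r s != h r s) + (g p r != h p r) + (g q s != h q s))%N ->
  (#|red_diff (switch g p q r s) h| < #|red_diff g h|)%N.
Proof.
move=> g_sym h_sym g_sw three; have /and5P[pqrs _ _ _ _] := g_sw.
have -> : red_diff (switch g p q r s) h =
    [set A | (A \in red_diff g h) (+) (A \in square_edges p q r s)].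
  by apply/setP => A; rewrite !inE red_switch // !inE !negb_eqb addbAC.
by apply: card_setXor_lt; rewrite card_square_edges // card_red_diff_square //; lia.
Qed.

Definition excess g h v : {set V} := [set w | g v w && ~~ h v w].

Lemma card_excessC g h v : deg g v = deg h v -> #|excess g h v| = #|excess h g v|.
Proof.
rewrite /deg => deg_v.
have excessE g' h' : excess g' h' v = [set w | g' v w] :\: [set w | h' v w].
  by apply/setP => w; rewrite !inE andbC.
have := cardsID [set w | h v w] [set w | g v w].
have := cardsID [set w | g v w] [set w | h v w].
by rewrite !excessE setIC; lia.
Qed.

Lemma exists_alternating_path g h u0 w0 :
  simple_graph g -> simple_graph h -> (forall v, deg g v = deg h v) ->
  g u0 w0 != h u0 w0 ->
  exists a b c d, [/\ uniq [:: a; b; c; d], g a b && ~~ h a b, h b c && ~~ g b c,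
    g c d && ~~ h c d & ~~ g a d || h a d].
Proof.
move=> [g_sym g_irr] [h_sym h_irr] deg_gh gh0.
(* Take c with a largest excess of g over h, b in excess h g c and a in excess g h b.
   Some d in excess g h c completes the path, for otherwise excess g h c :\ a would
   sit inside excess g h a :\ b, making the excess at a larger than at c. *)
have [c _ c_max] := @arg_maxnP V u0 xpredT (fun c => #|excess g h c|) erefl.
have u0_gt0 : (0 < #|excess g h u0|)%N.
  case/boolP: (g u0 w0) gh0 => g0 gh0.
    by apply/card_gt0P; exists w0; rewrite inE g0; case: (h u0 w0) gh0.
  rewrite card_excessC //; apply/card_gt0P; exists w0; rewrite inE g0 andbT.
  by case: (h u0 w0) gh0.
have c_gt0 : (0 < #|excess h g c|)%N.
  by rewrite -card_excessC //; apply: leq_trans u0_gt0 (c_max u0 erefl).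
case/card_gt0P: c_gt0 => b; rewrite inE => /andP[hcb gcb].
have b_gt0 : (0 < #|excess g h b|)%N.
  by rewrite card_excessC //; apply/card_gt0P; exists c; rewrite inE h_sym hcb g_sym.
case/card_gt0P: b_gt0 => a; rewrite inE => /andP[gba hba].
have ab : a != b by apply: contraTneq gba => ->; rewrite g_irr.
have ac : a != c by apply: contraNneq gcb => <-; rewrite g_sym.
have bc : b != c by apply: contraTneq hcb => ->; rewrite h_irr.
case: (boolP [exists d, [&& d \in excess g h c, d != a & d \notin excess g h a]]).
  case/existsP => d /and3P[]; rewrite !inE negb_and negbK => /andP[gcd hcd] da had.
  have bd : b != d by apply: contraNneq gcb => ->.
  have cd : c != d by apply: contraTneq gcd => <-; rewrite g_irr.
  exists a, b, c, d; split=> //.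
  - by rewrite /= !inE !negb_or ab ac bc bd cd eq_sym da.
  - by rewrite (g_sym a) gba (h_sym a) hba.
  - by rewrite (h_sym b) hcb (g_sym b) gcb.
  - by rewrite gcd hcd.
move/existsPn => no_d; exfalso.
have : (#|excess g h c| < #|excess g h a|)%N.
  apply: (card_lt_of_subD1 (a := a) (b := b) (c := c)) bc _ _.
  - by rewrite !inE (g_sym a) gba (h_sym a) hba (negbTE gcb).
  - by rewrite inE g_irr.
  - by rewrite !inE => /andP[gca hca]; rewrite g_sym gca h_sym hca.
  - apply/subsetP => d; rewrite in_setD1 => /andP[da dc].
    by move: (no_d d); rewrite dc da /= negbK.
by have := c_max a erefl; rewrite /= leqNgt => /negP.
Qed.

Lemma exists_reducing_switch g h :
  simple_graph g -> simple_graph h -> (forall v, deg g v = deg h v) -> red_diff g h != set0 ->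
  exists p q r s,
    switchable g p q r s /\ (#|red_diff (switch g p q r s) h| < #|red_diff g h|)%N \/
    switchable h p q r s /\ (#|red_diff g (switch h p q r s)| < #|red_diff g h|)%N.
Proof.
move=> g_simple h_simple deg_gh /set0Pn[A]; rewrite inE.
have [u [w [_ A_uw]]] := cedgeP A; have [g_sym _] := g_simple; have [h_sym _] := h_simple.
rewrite (redE g_sym A_uw) (redE h_sym A_uw) => gh_uw.
have [a [b [c [d [abcd /andP[gab hab] /andP[hbc gbc] /andP[gcd hcd] gad_had]]]]] :=
  exists_alternating_path g_simple h_simple deg_gh gh_uw.
have E := eq_distinct4 abcd.
case/boolP: (g a d) gad_had => /= gad had.
  exists b, c, a, d; right.
  have h_sw : switchable h b c a d.
    by rewrite /switchable /= !inE ?E /= hbc had (h_sym b) hab hcd.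
  split=> //; rewrite red_diffC (red_diffC g h); apply: card_red_diff_switch => //.
  by rewrite (h_sym b a) (g_sym b a) gab (negbTE hab) (negbTE gbc) hbc gad had gcd (negbTE hcd).
exists b, a, c, d; left.
have g_sw : switchable g b a c d.
  by rewrite /switchable /= !inE ?E /= (g_sym b) gab gcd gbc gad.
apply: (conj g_sw); apply: card_red_diff_switch => //.
by rewrite (g_sym b) (h_sym b) gab (negbTE hab) gcd (negbTE hcd) (negbTE gbc) hbc.
Qed.

Lemma same_degrees_switch_ind (P : rel V -> rel V -> Prop) :
  (forall g h, red g =1 red h -> P g h) ->
  (forall g h k, P g h -> P h k -> P g k) ->
  (forall g h, P g h -> P h g) ->
  (forall g p q r s, simple_graph g -> switchable g p q r s -> P g (switch g p q r s)) ->
  forall g h, simple_graph g -> simple_graph h -> (forall v, deg g v = deg h v) -> P g h.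
Proof.
move=> P_red P_trans P_sym P_switch g h.
have [n] := ubnP #|red_diff g h|; elim: n g h => // n IHn g h lt_n g_simple h_simple deg_gh.
have [D0 | D_neq0] := eqVneq (red_diff g h) set0.
  by apply: P_red => A; move/setP/(_ A): D0; rewrite !inE => /negbFE/eqP.
have [g_sym _] := g_simple; have [h_sym _] := h_simple.
have [p [q [r [s [[g_sw lt_g] | [h_sw lt_h]]]]]] :=
  exists_reducing_switch g_simple h_simple deg_gh D_neq0.
  apply: P_trans (P_switch _ _ _ _ _ g_simple g_sw) _.
  apply: IHn (leq_trans lt_g lt_n) (switch_simple g_simple g_sw) h_simple _.
  by move=> v; rewrite deg_switch.
apply: P_trans (P_sym _ _ (P_switch _ _ _ _ _ h_simple h_sw)).
apply: IHn (leq_trans lt_h lt_n) g_simple (switch_simple h_simple h_sw) _.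
by move=> v; rewrite deg_switch.
Qed.

End Distance.

Lemma same_span_dim_same_degrees (R : realFieldType) (V : finType) (g h : rel V) :
  simple_graph g -> simple_graph h -> (forall v, deg g v = deg h v) ->
  same_span_dim R (alt_cone g) (alt_cone h).
Proof.
apply: (same_degrees_switch_ind (P := fun g h => same_span_dim R (alt_cone g) (alt_cone h)))
  => [{}g {}h gh | {}g {}h k gh hk | {}g {}h gh | {}g p q r s [g_sym _] g_sw].
- by apply: same_span_dim_eq => x; apply: alt_cone_eq_red.
- exact: same_span_dim_trans gh hk.
- exact: same_span_dim_sym gh.
- exact: same_span_dim_switch g_sym g_sw.
Qed.

Section CedgeMap.
Variables (V1 V2 : finType) (f : V1 -> V2) (f_inj : injective f).

Lemma cedge_map_subproof (A : cedge V1) : #|f @: val A| == 2%N.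
Proof. by rewrite card_imset //; case: A. Qed.

Definition cedge_map (A : cedge V1) : cedge V2 := Sub (f @: val A) (cedge_map_subproof A).

Lemma red_cedge_map (e : rel V2) (A : cedge V1) :
  symmetric e -> red e (cedge_map A) = red (relpre f e) A.
Proof.
move=> e_sym; have [u [w [_ A_uw]]] := cedgeP A.
have fe_sym : symmetric (relpre f e) by move=> x y; rewrite /= e_sym.
rewrite (redE fe_sym A_uw) (@redE _ _ _ (f u) (f w) e_sym) //=.
by rewrite A_uw imsetU1 imset_set1.
Qed.

Variable R : realFieldType.

Definition comap (y : {ffun cedge V2 -> R^o}) : {ffun cedge V1 -> R^o} :=
  [ffun A => y (cedge_map A)].

Lemma comap_is_linear : linear comap.
Proof. by move=> k x y; apply/ffunP => A; rewrite !ffunE. Qed.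

HB.instance Definition _ :=
  GRing.isLinear.Build R {ffun cedge V2 -> R^o} {ffun cedge V1 -> R^o} *:%R
    comap comap_is_linear.

End CedgeMap.

Lemma cedge_map_can (V1 V2 : finType) (f : V1 -> V2) (g : V2 -> V1)
    (f_inj : injective f) (g_inj : injective g) :
  cancel f g -> cancel (cedge_map f_inj) (cedge_map g_inj).
Proof.
by move=> fK A; apply: val_inj; rewrite /= -imset_comp (eq_imset _ fK) imset_id.
Qed.

Section Relabel.
Variables (R : realFieldType) (V1 V2 : finType) (f : V1 -> V2) (g : V2 -> V1).
Hypotheses (fK : cancel f g) (gK : cancel g f).
Let f_inj := can_inj fK.
Let g_inj := can_inj gK.

Lemma comap_inj : injective (comap (R := R) f_inj).
Proof.
move=> y y' /ffunP yy'; apply/ffunP => B.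
by have := yy' (cedge_map g_inj B); rewrite !ffunE (cedge_map_can _ _ gK).
Qed.

Lemma alt_cone_comap (e : rel V2) (y : {ffun cedge V2 -> R^o}) :
  symmetric e -> alt_cone e y -> alt_cone (relpre f e) (comap (R := R) f_inj y).
Proof.
move=> e_sym /alt_coneE[y_ge0 y_bal]; apply/alt_coneE; split=> [A | v].
  by rewrite ffunE.
rewrite -(y_bal (f v)) /imbalance (reindex (cedge_map f_inj)) /=; last first.
  by apply: onW_bij; exists (cedge_map g_inj); apply: cedge_map_can.
apply: eq_big => [A | A _]; first by rewrite mem_imset.
by rewrite ffunE red_cedge_map.
Qed.

End Relabel.

Lemma deg_relpre (V1 V2 : finType) (f : V1 -> V2) (e : rel V2) v :
  bijective f -> deg (relpre f e) v = deg e (f v).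
Proof.
move=> [g fK gK]; rewrite /deg -(card_imset _ (can_inj fK)); apply: eq_card => w.
by rewrite -[w]gK mem_imset ?inE //; apply: can_inj fK.
Qed.

Lemma same_span_dim_relpre (R : realFieldType) (V1 V2 : finType) (f : V1 -> V2)
    (e : rel V2) :
  bijective f -> symmetric e -> same_span_dim R (alt_cone (relpre f e)) (alt_cone e).
Proof.
move=> [g fK gK] e_sym; have fe_sym : symmetric (relpre f e) by move=> x y; rewrite /= e_sym.
apply: (same_span_dim_inj (f := comap (R := R) (can_inj gK))
                          (g := comap (R := R) (can_inj fK))); try exact: comap_inj.
  have red_gfe : red (relpre g (relpre f e)) =1 red e.
    by move=> A; apply: eq_existsb => u; apply: eq_existsb => w; rewrite /= !gK.
  by move=> x /(alt_cone_comap gK fK fe_sym)/(alt_cone_eq_red _ red_gfe).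
by move=> y; apply: alt_cone_comap.
Qed.

Theorem lemma2p7 (R : realFieldType) (V1 V2 : finType) (e1 : rel V1) (e2 : rel V2)
  (h1 : simple_graph e1) (h2 : simple_graph e2)
  (pi : V1 -> V2) (hpi : bijective pi)
  (hdeg : forall v : V1, deg e2 (pi v) = deg e1 v) :
  exists (U1 : {vspace {ffun cedge V1 -> R^o}}) (U2 : {vspace {ffun cedge V2 -> R^o}}),
    [/\ span_of (alt_cone e1) U1, span_of (alt_cone e2) U2 & \dim U1 = \dim U2].
Proof.
have [U1 span_U1] := span_of_exists (@alt_cone R V1 e1).
have [U2 span_U2] := span_of_exists (@alt_cone R V2 e2).
exists U1, U2; split=> //.
have [e2_sym e2_irr] := h2.
have pi_e2_simple : simple_graph (relpre pi e2).
  by split=> [u w | u]; [apply: e2_sym | apply: e2_irr].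
have same_deg v : deg e1 v = deg (relpre pi e2) v by rewrite deg_relpre // hdeg.
have same_dim := same_span_dim_trans
  (same_span_dim_same_degrees (R := R) h1 pi_e2_simple same_deg)
  (same_span_dim_relpre (R := R) hpi e2_sym).
exact: same_dim span_U1 span_U2.
Qed.
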